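(* Let $X$ be an Alexandroff space, $Y$ a topological space, and $f:X\to Y$ a map with closed graph. Then $f$ is continuous.
   Context: For a map $f:X\to Y$ its graph is $G_f=\{(x,f(x)):x\in X\}$; $f$ has closed graph if $G_f$ is closed in $X\times Y$ (product topology). A topological space $X$ is an Alexandroff space if the intersection of every nonempty family of open subsets of $X$ is open; equivalently, every point $a\in X$ has a smallest open neighbourhood, denoted $V_a$. *)

From HB Require Import structures.
From mathcomp Require Import all_boot all_order.
From mathcomp Require Import all_classical topology.
Set Implicit Arguments. Unset Strict Implicit. Unset Printing Implicit Defensive.
Local Open Scope classical_set_scope.

Definition alexandroff (X : topologicalType) : Prop :=
  forall S : set (set X), S !=set0 ->
    (forall A, S A -> open A) -> open (\bigcap_(A in S) A).

Definition graph (X Y : Type) (f : X -> Y) : set (X * Y) :=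
  [set p | p.2 = f p.1].

From mathcomp Require Import all_boot all_order.
From mathcomp Require Import all_classical topology.
Local Open Scope classical_set_scope.

(* In an Alexandroff space every point a has a smallest open neighbourhood
   V_a.  Every x in V_a lies in every neighbourhood of a, so (a, f x) is in
   the closure of the graph; a closed graph forces f x = f a.  Hence f is
   constant on the open set V_a, which gives continuity at a. *)

Definition min_nbhs {X : topologicalType} (a : X) : set X :=
  \bigcap_(A in [set A | open A /\ A a]) A.

Section MinimalNeighbourhood.
Context {X : topologicalType} (a : X).

Lemma min_nbhs_self : min_nbhs a a.
Proof. by move=> A []. Qed.

Lemma min_nbhs_sub {U} : nbhs a U -> min_nbhs a `<=` U.
Proof. by rewrite nbhsE => -[O [oO Oa] OU] x Vx; apply: OU; apply: Vx. Qed.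

Lemma alexandroff_open_min_nbhs : alexandroff X -> open (min_nbhs a).
Proof.
move=> hA; apply: hA => [|A []//].
by exists setT; split; [exact: openT|].
Qed.

End MinimalNeighbourhood.

Lemma closed_graph_eq {X Y : topologicalType} {f : X -> Y} {a x : X} :
  closed (graph f) -> (forall U, nbhs a U -> U x) -> f x = f a.
Proof.
move=> hC ax; suff : graph f (a, f x) by [].
apply: hC => B [[P Q] /= [Pa Qfx] PQB].
exists (x, f x); split => //.
by apply: PQB; split => /=; [exact: ax | exact: nbhs_singleton].
Qed.

Theorem theorem3p2 (X Y : topologicalType) (f : X -> Y) :
  alexandroff X -> closed (graph f) -> continuous f.
Proof.
move=> hA hC a W /= Wfa.
rewrite nbhsE; exists (min_nbhs a).
  by split; [exact: alexandroff_open_min_nbhs | exact: min_nbhs_self].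
move=> x ax /=.
rewrite (closed_graph_eq hC (fun U aU => min_nbhs_sub a aU x ax)).
exact: nbhs_singleton.
Qed.
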